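(* Fix integers $2\le k\le n'\le n$, put $M=\lceil n/n'\rceil$ and $r=n-(M-1)n'$. Consider the $n'$-grouped $(k,n)$ random-grid sharing of a single secret bit $s$ described in the context, and for a valid partition $\vec\lambda=(\lambda_1,\ldots,\lambda_M)$ let $\#C(\vec\lambda)$ be the number of distinct indices among the selected share bits. Let $\varphi$ be a permutation of $\{1,\ldots,M\}$ such that $\varphi(\vec\lambda)=(\lambda_{\varphi(1)},\ldots,\lambda_{\varphi(M)})$ is also a valid partition. Then for every integer $h$ with $1\le h\le k$, $$\Pr(\#C(\vec\lambda)=h)=\Pr(\#C(\varphi(\vec\lambda))=h).$$
   Context: Basic bits: for a secret bit $s\in\{0,1\}$, $b_1,\ldots,b_{k-1}$ are independent uniform bits and $b_k=s\oplus b_1\oplus\cdots\oplus b_{k-1}$. There is a fixed sequence $c=(c_1,\ldots,c_{n'})\in\{1,\ldots,k\}^{n'}$ in which every value $1,\ldots,k$ occurs (the index pattern of the base $(k,n')$ scheme). The $n$ share bits are arranged in $M=\lceil n/n'\rceil$ groups: groups $1,\ldots,M-1$ have $n'$ positions and group $M$ has $r=n-(M-1)n'$ positions. For each group $j$, an independent uniformly random permutation $\sigma_j$ of $\{1,\ldots,n'\}$ is drawn (independent of the $b_i$), and the $\delta$-th position of group $j$ carries the index $c_{\sigma_j(\delta)}$ and the bit $b_{c_{\sigma_j(\delta)}}$ (for group $M$ only $\delta\le r$ is used). The $\delta$-th position of group $j$ is the share bit of shadow image number $(j-1)n'+\delta$. A valid partition (of $t$) is a vector $\vec\lambda=(\lambda_1,\ldots,\lambda_M)$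 of non-negative integers with $\sum_j\lambda_j=t$, $\max_j\lambda_j\le n'$ and $\lambda_M\le r$. Given $\vec\lambda$, one selects $\lambda_j$ positions from group $j$ for each $j$ (fixed positions; equivalently, uniformly at random without replacement, independently across groups); $C(\vec\lambda)$ is the multiset of indices carried by the selected positions and $\#C(\vec\lambda)$ is the number of distinct elements of $C(\vec\lambda)$. Probabilities are over the random permutations (and the random selection if used). *)

From mathcomp Require Import all_boot all_order all_algebra all_fingroup.
Set Implicit Arguments. Unset Strict Implicit. Unset Printing Implicit Defensive.

(* Conventions: shadow indices, group indices, positions and base indices are
   0-based: group j : 'I_M stands for group j+1, position d : 'I_np for
   position d+1, and base index i : 'I_k for index i+1. *)

Definition ngroups (n np : nat) : nat := (n + np.-1) %/ np.
Definition lastsize (n np : nat) : nat := n - (ngroups n np).-1 * np.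

Definition valid_partition (n np t : nat) (lam : 'I_(ngroups n np) -> nat) : Prop :=
  [/\ \sum_(j < ngroups n np) lam j = t,
      (forall j, lam j <= np) &
      (forall j : 'I_(ngroups n np), val j = (ngroups n np).-1 -> lam j <= lastsize n np)].

(* a choice of fixed selected positions realizing lam: lam j positions in group j,
   all of them existing positions (for the last group only d < r exist) *)
Definition selection_for (n np : nat) (lam : 'I_(ngroups n np) -> nat)
  (S : 'I_(ngroups n np) -> {set 'I_np}) : Prop :=
  forall j, #|S j| = lam j /\
    (val j = (ngroups n np).-1 -> forall d : 'I_np, d \in S j -> d < lastsize n np).

(* #C : number of distinct indices carried by the selected positions, when the
   group permutations are sigma: position d of group j carries c (sigma j d) *)
Definition numC (np k M : nat) (c : 'I_np -> 'I_k) (S : 'I_M -> {set 'I_np})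
  (sigma : {ffun 'I_M -> {perm 'I_np}}) : nat :=
  #|\bigcup_(j < M) [set c (sigma j d) | d in S j]|.

(* Pr(#C = h), the permutations sigma_j being independent and uniform *)
Definition prob_numC (np k M : nat) (c : 'I_np -> 'I_k) (S : 'I_M -> {set 'I_np})
  (h : nat) : rat :=
  (#|[set sigma : {ffun 'I_M -> {perm 'I_np}} | numC c S sigma == h]|%:R
    / #|{ffun 'I_M -> {perm 'I_np}}|%:R)%R.

From mathcomp Require Import all_boot all_order all_algebra all_fingroup.
Set Implicit Arguments. Unset Strict Implicit. Unset Printing Implicit Defensive.

(* Choose for every group j a permutation tau_j of positions sending the positions
   selected for phi(lambda) in group j onto those selected for lambda in group
   phi(j); they have the same number lambda_(phi j) of elements. Then
   sigma |-> (tau_j * sigma_(phi j))_j is a bijection of the uniformly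
   distributed families of group permutations which carries #C(phi(lambda)) to
   #C(lambda), so both have the same distribution. *)

Lemma mem_imset_tperm (T : finType) (a b x : T) (A : {set T}) :
  (x \in tperm a b @: A) = (tperm a b x \in A).
Proof. by rewrite (can2_imset_pre _ (tpermK a b) (tpermK a b)) inE. Qed.

Lemma cardsD_sym (T : finType) (A B : {set T}) :
  #|A| = #|B| -> #|A :\: B| = #|B :\: A|.
Proof. by move=> AB; rewrite !cardsD AB setIC. Qed.

Lemma perm_imset_of_card_eq (T : finType) (A B : {set T}) :
  #|A| = #|B| -> exists p : {perm T}, p @: A = B.
Proof.
(* Induction on #|A :\: B|: swapping some a in A :\: B with some b in B :\: A
   decreases it by one. *)
have [m] : exists m, #|A :\: B| <= m by exists #|A :\: B|.
elim: m A => [|m IHm] A leAB AB.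
  move: leAB; rewrite leqn0 cards_eq0 setD_eq0 => /subsetP AsubB.
  exists 1%g; apply/eqP; rewrite eqEcard (card_imset _ perm_inj) AB leqnn andbT.
  by apply/subsetP => _ /imsetP[x Ax ->]; rewrite perm1 AsubB.
have [AB0 | [a aAB]] := set_0Vmem (A :\: B).
  by apply: (IHm A) => //; rewrite AB0 cards0.
have [b bBA] : exists b, b \in B :\: A.
  by apply/set0Pn; rewrite -card_gt0 -cardsD_sym // card_gt0; apply/set0Pn; exists a.
move: aAB bBA; rewrite !inE => /andP[aB aA] /andP[bA bB].
have shrink : tperm a b @: A :\: B = (A :\: B) :\ a.
  apply/setP => x; rewrite !inE mem_imset_tperm.
  by case: tpermP => [-> | -> | /eqP xa _]; rewrite ?eqxx ?(negPf bA) ?bB ?xa ?andbF.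
have [p pAB] : exists p : {perm T}, p @: (tperm a b @: A) = B.
  apply: IHm; last by rewrite card_imset //; apply: perm_inj.
  by move: leAB; rewrite shrink (cardsD1 a) !inE aA aB.
by exists (tperm a b * p)%g; rewrite -pAB -imset_comp; apply: eq_imset => x; rewrite permM.
Qed.

Section RelabelGroups.

Variables (np k M : nat) (c : 'I_np -> 'I_k).
Variables (S S' : 'I_M -> {set 'I_np}) (phi : {perm 'I_M}).
Variable tau : 'I_M -> {perm 'I_np}.

Definition relabel (sigma : {ffun 'I_M -> {perm 'I_np}}) : {ffun 'I_M -> {perm 'I_np}} :=
  [ffun j => (tau j * sigma (phi j))%g].

Lemma relabel_inj : injective relabel.
Proof.
move=> sigma1 sigma2 /ffunP eq12; apply/ffunP => j.
by have := eq12 (phi^-1 j)%g; rewrite !ffunE permKV => /mulgI.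
Qed.

Hypothesis tauS : forall j, tau j @: S' j = S (phi j).

Lemma numC_relabel sigma : numC c S' (relabel sigma) = numC c S sigma.
Proof.
have groupE j :
    [set c (relabel sigma j d) | d in S' j] = [set c (sigma (phi j) e) | e in S (phi j)].
  by rewrite -tauS -imset_comp; apply: eq_imset => d; rewrite ffunE permM.
by rewrite /numC (eq_bigr _ (fun j _ => groupE j)) [in RHS](reindex_inj (@perm_inj _ phi)).
Qed.

End RelabelGroups.

Lemma prob_numC_permute_groups (np k M : nat) (c : 'I_np -> 'I_k)
    (S S' : 'I_M -> {set 'I_np}) (phi : {perm 'I_M}) (h : nat) :
  (forall j, #|S' j| = #|S (phi j)|) -> prob_numC c S h = prob_numC c S' h.
Proof.
move=> cardS.
have /fin_all_exists[tau tauS] :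
    forall j, exists p : {perm 'I_np}, p @: S' j = S (phi j).
  by move=> j; apply: perm_imset_of_card_eq.
rewrite /prob_numC; congr (_%:R / _)%R.
rewrite -[RHS](card_preimset _ (@relabel_inj _ _ phi tau)); apply: eq_card => sigma.
by rewrite !inE (numC_relabel _ tauS).
Qed.

Theorem lemma3 (k np n : nat) (c : 'I_np -> 'I_k)
  (hk : 2 <= k) (hknp : k <= np) (hnpn : np <= n)
  (csurj : forall i : 'I_k, exists d : 'I_np, c d = i)
  (t : nat) (lam : 'I_(ngroups n np) -> nat)
  (phi : {perm 'I_(ngroups n np)})
  (hlam : valid_partition t lam)
  (hphilam : valid_partition t (fun j => lam (phi j)))
  (S S' : 'I_(ngroups n np) -> {set 'I_np})
  (hS : selection_for lam S)
  (hS' : selection_for (fun j => lam (phi j)) S')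
  (h : nat) (h1 : 1 <= h) (hk2 : h <= k) :
  prob_numC c S h = prob_numC c S' h.
Proof.
apply: (@prob_numC_permute_groups _ _ _ c S S' phi) => j.
by rewrite (proj1 (hS' j)) (proj1 (hS (phi j))).
Qed.
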